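(* Let $G=(V,E)$ be an $r$-regular graph on a finite vertex set $V$ with $|V|$ even. Then $G$ is B-factorizable if and only if, for every HAP table $d\mapsto\{H(d),A(d)\}$ ($d\in\{1,\dots,r\}$), the polytope $P(G,HA)$ contains an integral point whenever it is non-empty. In particular, the complete graph on $V$ is B-factorizable if and only if for every HAP table, $P(K_{|V|},HA)$ contains an integral point whenever it is non-empty.
   Context: Let $V$ be a finite set with $|V|$ even. $K=\binom{V}{2}$ is the set of 2-element subsets of $V$. An equal partition of $V$ is an unordered pair $\{H,A\}$ of disjoint subsets with $H\cup A=V$ and $|H|=|A|=|V|/2$; $C=C(V)$ is the set of equal partitions. For $c=\{H,A\}\in C$, $B_c$ is the complete bipartite graph with parts $H$ and $A$. Vectors live in $\mathbb N^{K\cup C}$ with $\mathbb N=\{0,1,2,\dots\}$; $v|_K$ denotes the restriction to coordinates in $K$. For $E\subseteq K$, $\chi_E\in\{0,1\}^K$ is its indicator vector. For $E\subseteq K$ and $c\in C$, $\chi_{E,c}\in\mathbb N^{K\cup C}$ has $K$-components $\chi_E$ and $C$-components equal to the indicator of $c$. $PM(V)=\{\chi_{q,c}: c\in C,\ q\text{ a perfect matching of }B_c\}$. For $\mathcal M\subseteq\mathbb N^{K\cup C}$, $\mathbf N(\mathcal M)$ is the set of finite nonnegative integer combinations of elements of $\mathcal M$, and $\overline{\mathbf N}(\mathcal M)=\{v\in\mathbb N^{K\cup C}: kv\in\mathbf N(\mathcal M)\text{ for some integer }k\ge1\}$. A regular graph $G=(V,E)$ is B-factorizable if every $v\in\overline{\mathbf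 N}(PM(V))$ with $v|_K=\chi_E$ belongs to $\mathbf N(PM(V))$. For an $r$-regular graph $G=(V,E)$, a HAP table is a map assigning to each $d\in\{1,\dots,r\}$ an equal partition $\{H(d),A(d)\}\in C$. $P(G,HA)$ is the set of real vectors $(x_{e,d})_{e\in K,\,d\in\{1,\dots,r\}}$ satisfying: (1) $\sum_{d=1}^r x_{e,d}=1$ for every $e\in E$, and $x_{e,d}=0$ for every $e\in K\setminus E$ and every $d$; (2) for every $d$ and every $a\in V$, $\sum_{b\in V\setminus\{a\}}x_{\{a,b\},d}=1$; (3) $0\le x_{e,d}\le1$ for all $e\in E$ and all $d$; (4) $x_{\{a,b\},d}=0$ whenever $\{a,b\}\in E$ and $a,b$ are both in $H(d)$ or both in $A(d)$. *)

From HB Require Import structures.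
From mathcomp Require Import all_boot all_order all_algebra.
Set Implicit Arguments. Unset Strict Implicit. Unset Printing Implicit Defensive.
Import Order.TTheory GRing.Theory Num.Theory.

Section Defs.
Variable V : finType.

Definition K := {e : {set V} | #|e| == 2}.

(* C = equal partitions {H, A} of V, represented as the set of its two blocks *)
Definition C :=
  {P : {set {set V}} | [exists H : {set V}, (#|H|.*2 == #|V|) && (P == [set H; ~: H])]}.

(* e crosses c : e is not contained in a block of c, i.e. e is an edge of B_c *)
Definition crosses (c : C) (e : K) : bool :=
  [forall X in val c, ~~ (val e \subset X)].

Definition perfect_matching_of (c : C) (q : {set K}) : bool :=
  [forall e in q, crosses c e] &&
  [forall v : V, #|[set e in q | v \in val e]| == 1].

(* vectors in N^(K ∪ C) *)
Definition vec := ((K -> nat) * (C -> nat))%type.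

Definition PM (x : vec) : Prop :=
  exists (c : C) (q : {set K}), perfect_matching_of c q /\
    (forall e, x.1 e = nat_of_bool (e \in q)) /\ (forall c', x.2 c' = nat_of_bool (c' == c)).

Fixpoint all_in (M : vec -> Prop) (s : seq vec) : Prop :=
  if s is x :: s' then M x /\ all_in M s' else True.

Definition Ncone (M : vec -> Prop) (v : vec) : Prop :=
  exists s : seq vec, all_in M s /\
    (forall e, v.1 e = \sum_(x <- s) x.1 e) /\
    (forall c, v.2 c = \sum_(x <- s) x.2 c).

Definition scale_vec (k : nat) (v : vec) : vec :=
  (fun e => k * v.1 e, fun c => k * v.2 c).

Definition Nbar (M : vec -> Prop) (v : vec) : Prop :=
  exists k : nat, 0 < k /\ Ncone M (scale_vec k v).

Definition regular (E : {set K}) (r : nat) : Prop :=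
  forall a : V, #|[set e in E | a \in val e]| = r.

Definition B_factorizable (E : {set K}) : Prop :=
  forall v : vec, Nbar PM v -> (forall e, v.1 e = nat_of_bool (e \in E)) -> Ncone PM v.

(* P(G, HA) for a HAP table HA : 'I_r -> C  (d ∈ {1..r} indexed as 'I_r) *)
Definition in_P (R : realFieldType) (E : {set K}) (r : nat) (HA : 'I_r -> C)
  (x : K -> 'I_r -> R) : Prop :=
  ([/\ (forall e, e \in E -> \sum_(d < r) x e d = 1)
    , (forall e d, e \notin E -> x e d = 0)
    , (forall d (a : V), \sum_(e : K | a \in val e) x e d = 1)
    , (forall e d, e \in E -> (0 <= x e d) && (x e d <= 1))
    & (forall e d, e \in E -> ~~ crosses (HA d) e -> x e d = 0)])%R.

Definition integral_point (R : realFieldType) r (x : K -> 'I_r -> R) : Prop :=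
  exists z : K -> 'I_r -> int, forall e d, x e d = (z e d)%:~R%R.

Definition HAP_condition (R : realFieldType) (E : {set K}) (r : nat) : Prop :=
  forall HA : 'I_r -> C,
    (exists x, @in_P R E r HA x) -> exists x, @in_P R E r HA x /\ @integral_point R r x.

End Defs.

From HB Require Import structures.
From mathcomp Require Import all_boot all_order all_algebra.
Set Implicit Arguments. Unset Strict Implicit. Unset Printing Implicit Defensive.
Import Order.TTheory GRing.Theory Num.Theory.

(* Both directions go through matching colourings of E along a HAP table HA:
   maps g : 'I_r -> {set K} such that g d is a perfect matching of B_{HA d}
   and every edge of E lies in exactly one g d.  These are exactly the
   integral points of P(G, HA) (colouring_point, point_colouring), and
   exactly the decompositions of (chi_E, multiplicities of HA) into elements
   of PM(V) (colouring_cone, cone_colouring).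
   - B-factorizable => HAP: a real point of P(G, HA) gives a nonnegative
     rational one (support reduction + rank argument), hence a scaled
     colouring whose colour classes are k-regular crossing multigraphs; by
     Hall/Koenig these are sums of k perfect matchings, so k v \in N(PM).
   - HAP => B-factorizable: if k v \in N(PM), averaging the matchings along a
     HAP table with the partition multiplicities of v gives a point of P(G, HA).
   The complete graph is (|V|-1)-regular. *)

Section LinearSystems.
Local Open Scope ring_scope.

Definition solves (I J : finType) (a : J -> I -> nat) (b : J -> nat)
    (R : pzSemiRingType) (x : I -> R) : Prop :=
  forall j, \sum_i (a j i)%:R * x i = (b j)%:R.

Lemma sum_enum_val (T : finType) (U : nmodType) (F : T -> U) :
  \sum_(i : T) F i = \sum_(j < #|T|) F (enum_val j).
Proof.
rewrite (reindex (@enum_val T predT)) //.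
by exists enum_rank => [j _|i _]; rewrite ?enum_valK ?enum_rankK.
Qed.

(* A system with rational coefficients that is solvable over an ordered field
   is solvable over the rationals: the rank computation commutes with ratr. *)
Lemma rational_solution (I J : finType) (a : J -> I -> nat) (b : J -> nat)
    (R : realFieldType) (x : I -> R) :
  solves a b x -> exists y : I -> rat, solves a b y.
Proof.
move=> hx.
pose M : 'M[rat]_(#|I|, #|J|) := \matrix_(i, j) (a (enum_val j) (enum_val i))%:R.
pose bb : 'rV[rat]_#|J| := \row_j (b (enum_val j))%:R.
pose u : 'rV[R]_#|I| := \row_i x (enum_val i).
have hu : u *m map_mx ratr M = map_mx ratr bb.
  apply/rowP => j; rewrite !mxE rmorph_nat -hx [RHS]sum_enum_val.
  by apply: eq_bigr => i _; rewrite !mxE rmorph_nat mulrC.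
have: (map_mx (@ratr R) bb <= map_mx (@ratr R) M)%MS by apply/submxP; exists u.
rewrite map_submx => /submxP [u' hu'].
exists (fun i => u' 0 (enum_rank i)) => j.
have := congr1 (fun m : 'rV[rat]_#|J| => m 0 (enum_rank j)) hu'.
rewrite !mxE enum_rankK => ->; rewrite sum_enum_val; apply: eq_bigr => i _.
by rewrite !mxE enum_rankK enum_valK mulrC.
Qed.

Lemma sum_pick (I : finType) (U : pzSemiRingType) (i0 : I) (P : bool) (f : I -> U) :
  \sum_i ((i == i0) && P)%:R * f i = P%:R * f i0.
Proof.
rewrite (bigD1 i0) //= eqxx /= big1 ?addr0 // => i /negbTE ->.
by rewrite mul0r.
Qed.

Variables (R : realFieldType) (I J : finType) (a : J -> I -> nat) (b : J -> nat).
Local Notation sol := (solves a b).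

(* Moving a nonnegative solution x along a kernel direction w (supported in
   the support of x and positive somewhere) until a coordinate vanishes
   gives a nonnegative solution with strictly smaller support. *)
Lemma shrink_support (x w : I -> R) :
  (forall i, 0 <= x i) -> sol x ->
  (exists i, 0 < w i) -> (forall i, x i = 0 -> w i = 0) ->
  (forall j, \sum_i (a j i)%:R * w i = 0) ->
  exists2 x' : I -> R, (forall i, 0 <= x' i) /\ sol x' &
    [set i | x' i != 0] \proper [set i | x i != 0].
Proof.
move=> x0 hx [i1 wi1] wz ws.
pose i0 := [arg min_(i < i1 | 0 < w i) (x i / w i)]%O.
have [w0 i0min] : 0 < w i0 /\ forall i, 0 < w i -> x i0 / w i0 <= x i / w i.
  by rewrite /i0; case: arg_minP => // j hj hmin; split.
pose t := x i0 / w i0.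
exists (fun i => x i - t * w i); first split.
- move=> i; rewrite subr_ge0; case: (ltrP 0 (w i)) => hw.
    by rewrite -ler_pdivlMr // i0min.
  by apply: le_trans (x0 i); rewrite mulr_ge0_le0 // divr_ge0 // ltW.
- move=> j; under eq_bigr => i _ do rewrite mulrBr mulrCA.
  by rewrite sumrB -mulr_sumr ws mulr0 subr0 hx.
apply/properP; split.
  apply/subsetP => i; rewrite !inE; apply: contra => /eqP h.
  by rewrite (wz _ h) h mulr0 subr0.
exists i0; rewrite !inE; last by rewrite negbK /t divfK ?subrr // gt_eqF.
by apply/eqP => h; move: w0; rewrite (wz _ h) ltxx.
Qed.

(* Induction on the support: a rational solution vanishing off the
   support either equals x, or differs from x by a kernel direction. *)
Lemma rational_nonneg_solution (x : I -> R) :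
  (forall i, 0 <= x i) -> sol x ->
  exists y : I -> rat, (forall i, 0 <= y i) /\ sol y.
Proof.
have [N] := ubnP #|[set i | x i != 0]|.
elim: N x => [//|N IH] x supp_x x0 hx.
pose a' (j : J + I) i : nat :=
  match j with inl j => a j i | inr i0 => (i == i0) && (x i0 == 0) end.
pose b' (j : J + I) : nat := if j is inl j then b j else 0%N.
have [|y hy] := @rational_solution _ _ a' b' R x.
  case=> [j|i0] /=; first exact: hx.
  by rewrite sum_pick; case: eqP => [->|]; rewrite ?mulr0 ?mul0r.
pose w i := ratr (y i) - x i : R.
have w_supp : forall i, x i = 0 -> w i = 0.
  move=> i xi0; have := hy (inr i); rewrite /= sum_pick xi0 eqxx mul1r => yi0.
  by rewrite /w yi0 rmorph0 xi0 subrr.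
have w_ker : forall j, \sum_i (a j i)%:R * w i = 0.
  move=> j; under eq_bigr => i _ do rewrite mulrBr.
  rewrite sumrB hx; have := hy (inl j); rewrite /= => /(congr1 (@ratr R)).
  rewrite rmorph_sum rmorph_nat => <-; apply/eqP; rewrite subr_eq0; apply/eqP.
  by apply: eq_bigr => i _; rewrite rmorphM rmorph_nat.
have [/forallP w0|/forallPn [i wi]] := boolP [forall i, w i == 0].
  exists y; split => [i|j]; last exact: (hy (inl j)).
  by rewrite -(ler0q R); move: (w0 i); rewrite /w subr_eq0 => /eqP ->.
have [x' [x'0 hx'] supp_x'] : exists2 x' : I -> R,
    (forall i, 0 <= x' i) /\ sol x' & [set i | x' i != 0] \proper [set i | x i != 0].
  have [wpos|wneg] := ltrP 0 (w i).
    by apply: (shrink_support x0 hx _ w_supp w_ker); exists i.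
  apply: (@shrink_support x (fun i => - w i) x0 hx).
  - by exists i; rewrite oppr_gt0 lt_neqAle wneg andbT.
  - by move=> k /w_supp ->; rewrite oppr0.
  - by move=> j; under eq_bigr => k _ do rewrite mulrN; rewrite sumrN w_ker oppr0.
apply: (IH x') => //; rewrite -ltnS; exact: leq_trans (proper_card supp_x') supp_x.
Qed.

Lemma clear_denominators (y : I -> rat) : (forall i, 0 <= y i) ->
  exists2 k : nat, (0 < k)%N & exists z : I -> nat, forall i, (z i)%:R = k%:R * y i.
Proof.
move=> y0; pose k := (\prod_i `|denq (y i)|)%N.
exists k; first by rewrite prodn_gt0 // => i; rewrite absz_gt0 gt_eqF // denq_gt0.
exists (fun i => (\prod_(j | j != i) `|denq (y j)| * `|numq (y i)|)%N) => i.
rewrite /k [in RHS](bigD1 i) //= !(natrM rat).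
rewrite !natr_absz !ger0_norm ?numq_ge0 ?(ltW (denq_gt0 _)) //.
have e := divq_num_den (y i).
set n := numq (y i) in e *; set d := denq (y i) in e *.
have d0 : d%:~R != 0 :> rat by rewrite intr_eq0 gt_eqF ?denq_gt0.
rewrite -e [_ * (_%:R)]mulrC -mulrA; congr (_ * _).
by rewrite mulrC divfK.
Qed.

Lemma scaled_natural_solution (x : I -> R) : (forall i, 0 <= x i) -> sol x ->
  exists2 k : nat, (0 < k)%N &
    exists z : I -> nat, forall j, (\sum_i a j i * z i = k * b j)%N.
Proof.
move=> x0 hx; have [y [y0 hy]] := rational_nonneg_solution x0 hx.
have [k k0 [z hz]] := clear_denominators y0.
exists k => //; exists z => j.
apply/eqP; rewrite -(eqr_nat rat) natrM natr_sum -hy mulr_sumr; apply/eqP.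
by apply: eq_bigr => i _; rewrite natrM hz mulrCA.
Qed.

End LinearSystems.

Section Hall.
Variables (T : finType) (adj : rel T).

Definition nbr (R0 S : {set T}) : {set T} := [set a in R0 | [exists h in S, adj h a]].

Definition hall_condition (L R0 : {set T}) : Prop :=
  forall S : {set T}, S \subset L -> #|S| <= #|nbr R0 S|.

Definition matches (f : T -> T) (L R0 : {set T}) : Prop :=
  {in L &, injective f} /\ forall h, h \in L -> (f h \in R0) && adj h (f h).

Lemma nbr_sub (R0 S : {set T}) : nbr R0 S \subset R0.
Proof. by apply/subsetP => a; rewrite inE => /andP []. Qed.

Lemma matches_glue (S L R1 R0 : {set T}) (f1 f2 : T -> T) :
  R1 \subset R0 -> matches f1 S R1 -> matches f2 (L :\: S) (R0 :\: R1) ->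
  matches (fun h => if h \in S then f1 h else f2 h) L R0.
Proof.
move=> R10 [f1i f1h] [f2i f2h].
have inLS h : h \in L -> h \notin S -> h \in L :\: S by move=> ? ?; rewrite inE; apply/andP.
have f2out h : h \in L -> h \notin S -> (f2 h \in R0) && (f2 h \notin R1).
  by move=> hL hS; have /andP [] := f2h h (inLS h hL hS); rewrite inE andbC.
split=> [x y xL yL|h hL] /=.
  case xS: (x \in S); case yS: (y \in S).
  - exact: f1i.
  - move=> e; have /andP [f1y _] := f1h x xS.
    by have /andP [_] := f2out y yL (negbT yS); rewrite -e f1y.
  - move=> e; have /andP [f1y _] := f1h y yS.
    by have /andP [_] := f2out x xL (negbT xS); rewrite e f1y.
  - by apply: f2i; apply: inLS; rewrite ?xS ?yS.
case hS: (h \in S).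
  by have /andP [/(subsetP R10) -> ->] := f1h h hS.
have /andP [_ ->] := f2h h (inLS h hL (negbT hS)).
by have /andP [-> _] := f2out h hL (negbT hS).
Qed.

Lemma hall_inside (S L R0 : {set T}) :
  S \subset L -> hall_condition L R0 -> hall_condition S (nbr R0 S).
Proof.
move=> SL hH S' S'S; have := hH S' (subset_trans S'S SL).
suff -> : nbr (nbr R0 S) S' = nbr R0 S' by [].
apply/setP => a; rewrite !inE; case: (a \in R0) => //=.
case hx: [exists h in S', adj h a]; rewrite ?andbF ?andbT //.
move/existsP: hx => [h /andP [hS' ha]].
by apply/existsP; exists h; rewrite ha (subsetP S'S).
Qed.

Lemma hall_outside (S L R0 : {set T}) :
  S \subset L -> #|nbr R0 S| <= #|S| -> hall_condition L R0 ->
  hall_condition (L :\: S) (R0 :\: nbr R0 S).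
Proof.
move=> SL tight hH S' S'L.
have S'S : [disjoint S' & S].
  by apply/pred0P => x /=; apply/andP => -[/(subsetP S'L)]; rewrite inE => /andP [/negP].
have hU : #|S' :|: S| <= #|nbr R0 (S' :|: S)|.
  by apply: hH; rewrite subUset SL andbT (subset_trans S'L) ?subsetDl.
have sub : nbr R0 (S' :|: S) \subset nbr (R0 :\: nbr R0 S) S' :|: nbr R0 S.
  apply/subsetP => a; rewrite inE => /andP [aR /existsP [h /andP [hin ha]]].
  rewrite inE; case: (boolP (a \in nbr R0 S)) => aN; rewrite ?orbT //= orbF.
  rewrite inE; apply/andP; split; first by rewrite inE aN aR.
  move: hin; rewrite inE => /orP [hS1|hS2]; first by apply/existsP; exists h; rewrite hS1 ha.
  by move: aN; rewrite inE aR /= => /negP []; apply/existsP; exists h; rewrite hS2 ha.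
have := leq_trans hU (leq_trans (subset_leq_card sub) (leq_card_setU _ _)).
rewrite cardsU (disjoint_setI0 S'S) cards0 subn0 => h1.
by have := leq_trans h1 (leq_add (leqnn _) tight); rewrite leq_add2r.
Qed.

Lemma hall_surplus (L R0 : {set T}) (h0 a0 : T) :
  (forall S : {set T}, S \proper L -> S != set0 -> #|S| < #|nbr R0 S|) ->
  h0 \in L ->
  hall_condition (L :\ h0) (R0 :\ a0).
Proof.
move=> surplus h0L S' S'L; have [->|S'0] := eqVneq S' set0; first by rewrite cards0.
have S'P : S' \proper L.
  apply/properP; split; first exact: subset_trans S'L (subsetDl _ _).
  by exists h0 => //; apply/negP => /(subsetP S'L); rewrite !inE eqxx.
have := surplus S' S'P S'0.
have -> : nbr (R0 :\ a0) S' = nbr R0 S' :\ a0 by apply/setP => a; rewrite !inE andbA.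
by rewrite (cardsD1 a0 (nbr R0 S')); case: (a0 \in nbr R0 S') => //= /ltnW.
Qed.

Theorem hall (L R0 : {set T}) : hall_condition L R0 -> exists f, matches f L R0.
Proof.
have [n] := ubnP #|L|; elim: n L R0 => [//|n IH] L R0; rewrite ltnS => hL hH.
have [->|[h0 h0L]] := set_0Vmem L; first by exists id; split => [x y|h]; rewrite inE.
have [/existsP [S /and3P [SL S0 tight]]|] :=
  boolP [exists S : {set T}, [&& S \proper L, S != set0 & #|nbr R0 S| <= #|S|]].
  have SL' := proper_sub SL.
  have [f1 hf1] := IH S (nbr R0 S) (leq_trans (proper_card SL) hL) (hall_inside SL' hH).
  have [|f2 hf2] := IH (L :\: S) (R0 :\: nbr R0 S) _ (hall_outside SL' tight hH).
    apply: (leq_trans _ hL); rewrite cardsD (setIidPr SL') ltn_subrL.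
    case/set0Pn: (S0) => x xS; rewrite !card_gt0.
    by apply/andP; split; apply/set0Pn; exists x => //; apply: (subsetP SL').
  exists (fun h => if h \in S then f1 h else f2 h).
  exact: matches_glue (nbr_sub _ _) hf1 hf2.
rewrite negb_exists => /forallP no_tight.
have surplus (S : {set T}) : S \proper L -> S != set0 -> #|S| < #|nbr R0 S|.
  by move=> SL S0; have := no_tight S; rewrite SL S0 /= ltnNge.
have : 0 < #|nbr R0 [set h0]| by apply: leq_trans (hH _ _); rewrite ?cards1 // sub1set.
rewrite card_gt0 => /set0Pn [a0]; rewrite inE => /andP [a0R /existsP [h' /andP]].
rewrite inE => -[/eqP -> ha0].
have [|f' hf'] := IH (L :\ h0) (R0 :\ a0) _ (hall_surplus a0 surplus h0L).
  by apply: (leq_trans _ hL); rewrite (cardsD1 h0 L) h0L.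
have f1 : matches (fun=> a0) [set h0] [set a0].
  split=> [x y|h]; rewrite !inE; first by move=> /eqP -> /eqP ->.
  by move=> /eqP ->; rewrite eqxx.
exists (fun h => if h \in [set h0] then a0 else f' h).
by apply: matches_glue f1 hf'; rewrite sub1set.
Qed.

End Hall.

Lemma sum_indicator_card (T : finType) (P : pred T) (A : {set T}) :
  \sum_(x | P x) (x \in A : nat) = #|[set x in A | P x]|.
Proof.
rewrite -sum1dep_card [RHS](eq_bigl (fun x => P x && (x \in A))); last first.
  by move=> x; rewrite andbC.
by rewrite big_mkcondr /=; apply: eq_bigr => x _; case: (x \in A).
Qed.

Lemma cards1_uniq (T : finType) (A : {set T}) :
  (exists x, x \in A) -> {in A &, forall x y, x = y} -> #|A| == 1.
Proof.
move=> [x xA] u; apply/cards1P; exists x; apply/setP => y; rewrite inE.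
by apply/idP/eqP => [yA|->//]; apply: u.
Qed.

Section BipartiteMatchings.
Variable V : finType.
Local Notation K := (K V).
Local Notation C := (C V).

Lemma C_split (c : C) : exists H : {set V}, #|H|.*2 = #|V| /\ val c = [set H; ~: H].
Proof. by case: c => P /= /existsP [H /andP [/eqP h /eqP ->]]; exists H. Qed.

Lemma edge_has_vertex (e : K) : exists a, a \in val e.
Proof. by apply/set0Pn; rewrite -card_gt0 (eqP (valP e)). Qed.

Lemma edge_pair_eq (e : K) (h a : V) :
  h \in val e -> a \in val e -> h != a -> val e = [set h; a].
Proof.
move=> he ae ha; apply/esym/eqP; rewrite eqEcard cards2 ha (eqP (valP e)) andbT.
by apply/subsetP => x; rewrite !inE => /orP [] /eqP ->.
Qed.

Lemma crosses_pair (c : C) (H : {set V}) (e : K) : val c = [set H; ~: H] ->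
  crosses c e -> exists h a, [/\ h \in H, a \notin H & val e = [set h; a]].
Proof.
move=> hc; rewrite /crosses hc => /forallP hf.
have := hf H; have := hf (~: H); rewrite !inE !eqxx /= orbT /=.
move=> /subsetPn [h he]; rewrite inE negbK => hH /subsetPn [a ae aH].
exists h, a; split => //; apply: edge_pair_eq => //.
by apply: contraNneq aH => <-.
Qed.

Lemma degree_sum (y : K -> nat) (X : {set V}) :
  \sum_(h in X) \sum_(e : K | h \in val e) y e = \sum_(e : K) y e * #|X :&: val e|.
Proof.
rewrite (exchange_big_dep predT) //=; apply: eq_bigr => e _.
rewrite (eq_bigl (fun h => h \in X :&: val e)); last by move=> h; rewrite inE.
by rewrite sum_nat_const mulnC.
Qed.

Section SupportMatching.
Variables (c : C) (H : {set V}) (y : K -> nat) (k : nat).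
Hypotheses (cH : val c = [set H; ~: H]) (cardH : #|H|.*2 = #|V|) (k_gt0 : 0 < k).
Hypothesis y_cross : forall e, 0 < y e -> crosses c e.
Hypothesis y_reg : forall a : V, \sum_(e : K | a \in val e) y e = k.

Definition supp_adj (h a : V) : bool :=
  [exists e : K, [&& 0 < y e, h \in val e & a \in val e]].

Lemma supp_edge_meet (S : {set V}) (e : K) : S \subset H -> 0 < y e ->
  #|S :&: val e| <= #|nbr supp_adj (~: H) S :&: val e|.
Proof.
move=> SH ye; have [h [a [hH aH ee]]] := crosses_pair cH (y_cross ye).
have aS : a \notin S by apply: contra aH => /(subsetP SH).
rewrite ee; case: (boolP (h \in S)) => hS; last first.
  suff -> : S :&: [set h; a] = set0 by rewrite cards0.
  apply/setP => x; rewrite !inE; apply/negP => /andP [xS /orP [] /eqP xe].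
    by move: hS; rewrite -xe xS.
  by move: aS; rewrite -xe xS.
have sub1 : S :&: [set h; a] \subset [set h].
  apply/subsetP => x; rewrite !inE => /andP [xS /orP [//|/eqP xa]].
  by move: aS; rewrite -xa xS.
apply: leq_trans (subset_leq_card sub1) _.
rewrite cards1 card_gt0; apply/set0Pn; exists a; rewrite !inE eqxx orbT andbT aH /=.
apply/existsP; exists h; rewrite hS /=; apply/existsP; exists e.
by rewrite ye ee !inE !eqxx ?orbT.
Qed.

(* Hall's condition, by double counting the degrees (all equal to k). *)
Lemma supp_hall : hall_condition supp_adj H (~: H).
Proof.
move=> S SH; rewrite -(leq_pmul2l k_gt0).
have deg (X : {set V}) : k * #|X| = \sum_(h in X) \sum_(e : K | h \in val e) y e.
  by rewrite (eq_bigr (fun _ => k)) => [|h _]; [rewrite sum_nat_const mulnC | rewrite y_reg].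
rewrite !deg !degree_sum; apply: leq_sum => e _.
have [->|ye] := posnP (y e); first by rewrite !mul0n.
by rewrite leq_pmul2l // supp_edge_meet.
Qed.

(* A Hall matching f of H into ~H along support edges is onto ~H, hence
   its edges form a perfect matching of B_c inside the support of y. *)
Lemma matching_of_injection (f : V -> V) : matches supp_adj f H (~: H) ->
  exists q : {set K}, perfect_matching_of c q /\ forall e, e \in q -> 0 < y e.
Proof.
move=> [finj fh].
have fH h : h \in H -> f h \notin H by move=> /fh /andP []; rewrite inE.
have fsurj a : a \notin H -> exists2 h, h \in H & a = f h.
  move=> aH; have cardHC : #|~: H| = #|H|.
    by have := cardsC H; rewrite -cardH -addnn => /eqP; rewrite eqn_add2l => /eqP.
  have im : f @: H = ~: H.
    apply/eqP; rewrite eqEcard card_in_imset // cardHC leqnn andbT.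
    by apply/subsetP => x /imsetP [h hH ->]; rewrite inE fH.
  by move: aH; rewrite -in_setC -im => /imsetP.
pose q := [set e : K | (0 < y e) && [exists h in H, (h \in val e) && (f h \in val e)]].
exists q; split; last by move=> e; rewrite inE => /andP [].
have qform e : e \in q -> exists2 h, h \in H & val e = [set h; f h].
  rewrite inE => /andP [_ /existsP [h /and3P [hH he fhe]]].
  by exists h => //; apply: edge_pair_eq => //; apply: contraNneq (fH h hH) => <-.
have adjq h : h \in H -> exists2 e, e \in q & (h \in val e) && (f h \in val e).
  move=> hH; have /andP [_ /existsP [e /and3P [ye he fhe]]] := fh h hH.
  by exists e; rewrite ?he ?fhe // inE ye; apply/existsP; exists h; rewrite hH he fhe.
apply/andP; split.
  by apply/forallP => e; apply/implyP; rewrite inE => /andP [/y_cross].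
apply/forallP => v; apply: cards1_uniq.
  have [vH|vH] := boolP (v \in H).
    by have [e eq /andP [ve _]] := adjq v vH; exists e; rewrite inE eq ve.
  have [h hH ->] := fsurj v vH.
  by have [e eq /andP [_ ve]] := adjq h hH; exists e; rewrite inE eq ve.
move=> e1 e2; rewrite [e1 \in _]inE [e2 \in _]inE => /andP [e1q v1] /andP [e2q v2].
have [h1 h1H e1e] := qform _ e1q; have [h2 h2H e2e] := qform _ e2q.
apply: val_inj; rewrite e1e e2e; move: v1 v2; rewrite e1e e2e !inE.
have [vH|vH] := boolP (v \in H).
  case/orP => /eqP v1; last by move: (fH _ h1H); rewrite -v1 vH.
  case/orP => /eqP v2; last by move: (fH _ h2H); rewrite -v2 vH.
  by rewrite -v1 -v2.
case/orP => /eqP v1; first by move: vH; rewrite v1 h1H.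
case/orP => /eqP v2; first by move: vH; rewrite v2 h2H.
by rewrite (finj h1 h2) // -v1 -v2.
Qed.

End SupportMatching.

Lemma matching_in_support (c : C) (y : K -> nat) (k : nat) : 0 < k ->
  (forall e, 0 < y e -> crosses c e) ->
  (forall a : V, \sum_(e : K | a \in val e) y e = k) ->
  exists q : {set K}, perfect_matching_of c q /\ forall e, e \in q -> 0 < y e.
Proof.
move=> k_gt0 y_cross y_reg; have [H [cardH cH]] := C_split c.
have [f hf] := hall (supp_hall cH k_gt0 y_cross y_reg).
exact: (@matching_of_injection c H y cardH y_cross f hf).
Qed.

Lemma regular_decomposition (c : C) (k : nat) (y : K -> nat) :
  (forall e, 0 < y e -> crosses c e) ->
  (forall a : V, \sum_(e : K | a \in val e) y e = k) ->
  exists qs : seq {set K}, [/\ size qs = k, all (perfect_matching_of c) qs &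
     forall e, y e = \sum_(q <- qs) (e \in q : nat)].
Proof.
elim: k y => [|k IH] y y_cross y_reg.
  exists [::]; split => // e; rewrite big_nil.
  have [a ae] := edge_has_vertex e.
  by move/eqP: (y_reg a); rewrite sum_nat_eq0 => /forallP /(_ e); rewrite ae => /eqP.
have [q [qpm qy]] := matching_in_support (ltn0Sn k) y_cross y_reg.
pose y' e := y e - (e \in q).
have yy e : y e = y' e + (e \in q).
  by rewrite /y' subnK //; case eq: (e \in q) => //; exact: qy.
have [||qs [sz pm hy]] := IH y'.
- by move=> e ye; apply: y_cross; rewrite yy; exact: leq_trans ye (leq_addr _ _).
- move=> a; have := y_reg a; under eq_bigr => e _ do rewrite yy.
  rewrite big_split /= sum_indicator_card.
  by move: qpm => /andP [_ /forallP /(_ a) /eqP ->]; rewrite addn1 => -[].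
exists (q :: qs); split => /=; [by rewrite sz | by rewrite qpm |].
by move=> e; rewrite big_cons yy hy addnC.
Qed.

End BipartiteMatchings.

Lemma sum_bool_card (T : finType) (P : pred T) : \sum_i (P i : nat) = #|[set i | P i]|.
Proof. by rewrite -sum1dep_card [RHS]big_mkcond /=; apply: eq_bigr => i _; case: (P i). Qed.

Lemma table_exists (T : finType) (m : T -> nat) (r : nat) : \sum_t m t = r ->
  exists HA : 'I_r -> T, forall t, #|[set d | HA d == t]| = m t.
Proof.
move=> <-; pose ts := flatten [seq nseq (m t) t | t <- index_enum T].
have sz : size ts = \sum_t m t.
  rewrite size_flatten /shape -map_comp sumnE big_map; apply: eq_bigr => t _.
  by rewrite /= size_nseq.
exists (fun d => tnth (tcast sz (in_tuple ts)) d) => t.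
rewrite -sum1dep_card -(big_tuple 0 addn (tcast sz (in_tuple ts)) (fun x => x == t) (fun=> 1)).
rewrite val_tcast /= sum1_count count_flatten sumnE !big_map (bigD1 t) //=.
rewrite count_nseq /= eqxx mul1n big1 ?addn0 // => t' /negbTE ht.
by rewrite count_nseq /= ht.
Qed.

Section PerfectMatchingCone.
Variable V : finType.
Local Notation K := (K V).
Local Notation C := (C V).
Local Notation vec := (vec V).
Local Notation PM := (@PM V).

Definition pm_vec (c : C) (q : {set K}) : vec :=
  (fun e => (e \in q : nat), fun c' => (c' == c : nat)).

Lemma pm_vecP (c : C) (q : {set K}) : perfect_matching_of c q -> PM (pm_vec c q).
Proof. by move=> pm; exists c, q. Qed.

Lemma all_in_sum (M : vec -> Prop) (s : seq vec) (F G : vec -> nat) :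
  all_in M s -> (forall x, M x -> F x = G x) ->
  \sum_(x <- s) F x = \sum_(x <- s) G x.
Proof.
elim: s => [|x s IH] /=; first by rewrite !big_nil.
by move=> [Mx Ms] h; rewrite !big_cons h // IH.
Qed.

Lemma all_in_sum_le (M : vec -> Prop) (s : seq vec) (F G : vec -> nat) :
  all_in M s -> (forall x, M x -> F x <= G x) ->
  \sum_(x <- s) F x <= \sum_(x <- s) G x.
Proof.
elim: s => [|x s IH] /=; first by rewrite !big_nil.
by move=> [Mx Ms] h; rewrite !big_cons leq_add // ?h // IH.
Qed.

Lemma all_in_map (M : vec -> Prop) (T : Type) (f : T -> vec) (l : seq T) :
  (forall t, M (f t)) -> all_in M (map f l).
Proof. by move=> h; elim: l => //= t l IH; split. Qed.

Lemma all_in_cat (M : vec -> Prop) (s1 s2 : seq vec) :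
  all_in M s1 -> all_in M s2 -> all_in M (s1 ++ s2).
Proof. by elim: s1 => //= x s1 IH [? ?] ?; split => //; apply: IH. Qed.

Lemma PM_degree (x : vec) : PM x -> forall a : V, \sum_(e : K | a \in val e) x.1 e = 1.
Proof.
move=> [c [q [/andP [_ /forallP deg] [h1 _]]]] a.
by under eq_bigr => e _ do rewrite h1; rewrite sum_indicator_card (eqP (deg a)).
Qed.

Lemma PM_partition (x : vec) : PM x -> \sum_(c : C) x.2 c = 1.
Proof.
move=> [c [q [_ [_ h2]]]]; under eq_bigr => c' _ do rewrite h2.
by rewrite (bigD1 c) //= eqxx big1 // => c' /negbTE ->.
Qed.

Lemma PM_edge_le1 (x : vec) (e : K) : PM x -> x.1 e <= 1.
Proof. by move=> [c [q [_ [h1 _]]]]; rewrite h1 leq_b1. Qed.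

Lemma PM_cross (x : vec) (c : C) (e : K) :
  PM x -> x.2 c != 0 -> x.1 e != 0 -> crosses c e.
Proof.
move=> [c0 [q [pm [h1 h2]]]]; rewrite h1 h2.
case hc: (c == c0) => // _; rewrite (eqP hc).
by case eq: (e \in q) => // _; move: pm => /andP [/forallP /(_ e) /implyP /(_ eq)].
Qed.

Definition table_vec (E : {set K}) (r : nat) (HA : 'I_r -> C) : vec :=
  (fun e => (e \in E : nat), fun c => #|[set d | HA d == c]|).

Definition matching_colouring (E : {set K}) (r : nat) (HA : 'I_r -> C)
    (g : 'I_r -> {set K}) : Prop :=
  (forall d, perfect_matching_of (HA d) (g d)) /\
  (forall e, \sum_d (e \in g d : nat) = (e \in E)).

Variables (E : {set K}) (r : nat) (HA : 'I_r -> C).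

Lemma colouring_cone (g : 'I_r -> {set K}) :
  matching_colouring E HA g -> Ncone PM (table_vec E HA).
Proof.
move=> [gpm gsum]; exists [seq pm_vec (HA d) (g d) | d <- index_enum 'I_r].
split; first by apply: all_in_map => d; apply: pm_vecP.
split=> [e|c] /=; rewrite big_map; first by rewrite gsum.
by rewrite -sum_bool_card; apply: eq_bigr => d _; rewrite eq_sym.
Qed.

Lemma assign_matchings (s : seq vec) : all_in PM s ->
  forall D : {set 'I_r}, (forall c, \sum_(x <- s) x.2 c = #|[set d in D | HA d == c]|) ->
  exists g : 'I_r -> {set K}, (forall d, d \in D -> perfect_matching_of (HA d) (g d)) /\
     forall e, \sum_(d in D) (e \in g d : nat) = \sum_(x <- s) x.1 e.
Proof.
elim: s => [|x s IH] /=.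
  move=> _ D hD; exists (fun=> set0).
  have D0 d : d \notin D.
    apply/negP => dD; have := hD (HA d); rewrite big_nil => /esym /eqP.
    by rewrite cards_eq0 => /eqP /setP /(_ d); rewrite !inE dD eqxx.
  split => [d|e]; first by rewrite (negbTE (D0 d)).
  by rewrite big_nil big1 // => d; rewrite (negbTE (D0 d)).
move=> [[c0 [q0 [pm [h1 h2]]]] sPM] D hD.
have : 0 < #|[set d in D | HA d == c0]| by rewrite -hD big_cons h2 eqxx.
rewrite card_gt0 => /set0Pn [d0]; rewrite inE => /andP [d0D /eqP hd0].
have [c|g [gpm gsum]] := IH sPM (D :\ d0).
  have e1 : #|[set d in D | HA d == c]| = (c == c0) + #|[set d in D :\ d0 | HA d == c]|.
    rewrite (cardsD1 d0 [set d in D | HA d == c]) !inE d0D hd0 eq_sym /=.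
    suff -> : [set d in D | HA d == c] :\ d0 = [set d in D :\ d0 | HA d == c] by [].
    by apply/setP => d; rewrite !inE andbA.
  by have := hD c; rewrite big_cons h2 e1 => /eqP; rewrite eqn_add2l => /eqP.
exists (fun d => if d == d0 then q0 else g d); split.
  move=> d dD; case: eqP => [->|/eqP nd]; first by rewrite hd0.
  by apply: gpm; rewrite !inE nd.
move=> e; rewrite big_cons (bigD1 d0) //= eqxx h1; congr (_ + _).
rewrite -gsum; apply: eq_big => [d|d /andP [_ /negbTE ->] //].
by rewrite !inE andbC.
Qed.

Lemma cone_colouring : Ncone PM (table_vec E HA) ->
  exists g : 'I_r -> {set K}, matching_colouring E HA g.
Proof.
move=> [s [sPM [s1 s2]]].
have [c|g [gpm gsum]] := @assign_matchings s sPM [set: 'I_r].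
  by rewrite -s2; apply: eq_card => d; rewrite !inE.
exists g; split=> [d|e]; first by apply: gpm; rewrite inE.
by rewrite -[RHS]/((table_vec E HA).1 e) s1 -gsum; apply: eq_bigl => d; rewrite inE.
Qed.

End PerfectMatchingCone.

Section IntegralPoints.
Local Open Scope ring_scope.
Variables (R : realFieldType) (V : finType) (E : {set K V}) (r : nat) (HA : 'I_r -> C V).

Lemma colouring_point (g : 'I_r -> {set K V}) : matching_colouring E HA g ->
  exists x : K V -> 'I_r -> R, in_P E HA x /\ integral_point x.
Proof.
move=> [gpm gsum]; exists (fun e d => (e \in g d : nat)%:R : R).
split; last by exists (fun e d => Posz (e \in g d)).
split.
- by move=> e eE; rewrite -natr_sum gsum eE.
- move=> e d eE; have := gsum e; rewrite (negbTE eE) => /eqP.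
  by rewrite sum_nat_eq0 => /forallP /(_ d) /eqP ->.
- move=> d a; rewrite -natr_sum sum_indicator_card.
  by have /andP [_ /forallP /(_ a) /eqP ->] := gpm d.
- by move=> e d _; case: (e \in g d); rewrite ?lexx ?ler01.
- move=> e d _ nc; case eg: (e \in g d) => //.
  by move: nc; have /andP [/forallP /(_ e) /implyP /(_ eg) -> _] := gpm d.
Qed.

(* An integral point of P(G, HA) is 0/1-valued, and its colour classes form
   a matching colouring. *)
Lemma point_colouring (x : K V -> 'I_r -> R) : in_P E HA x -> integral_point x ->
  exists g : 'I_r -> {set K V}, matching_colouring E HA g.
Proof.
move=> [xE x0 xdeg xbd xcross] [z xz].
have x01 e d : x e d = (x e d == 1)%:R.
  have [eE|eE] := boolP (e \in E); last by rewrite x0 // eq_sym oner_eq0.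
  have /andP [] := xbd e d eE; rewrite xz ler0z lerz1.
  by case: (z e d) => [[|[|n]]|n] //= _ _; rewrite ?eqxx // eq_sym oner_eq0.
have x1E e d : x e d = 1 -> e \in E.
  by move=> x1; apply: contraT => eE; move: x1; rewrite x0 // => /eqP; rewrite eq_sym oner_eq0.
exists (fun d => [set e | x e d == 1]); split=> [d|e].
  apply/andP; split.
    apply/forallP => e; apply/implyP; rewrite inE => /eqP x1.
    apply: contraT => nc; move: (x1); rewrite xcross ?(x1E _ _ x1) //.
    by move=> /eqP; rewrite eq_sym oner_eq0.
  apply/forallP => a; rewrite -sum_indicator_card -(eqr_nat R) natr_sum.
  by under eq_bigr => e _ do rewrite inE -x01; rewrite xdeg.
apply/eqP; rewrite -(eqr_nat R) natr_sum.
under eq_bigr => d _ do rewrite inE -x01.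
have [eE|eE] := boolP (e \in E); first by rewrite xE ?eE.
by rewrite big1 ?(negbTE eE) // => d _; rewrite x0.
Qed.

End IntegralPoints.

Lemma sum_table (I T : finType) (U : pzSemiRingType) (HA : I -> T) (F : T -> U) :
  (\sum_d F (HA d) = \sum_t #|[set d | HA d == t]|%:R * F t)%R.
Proof.
rewrite (partition_big HA predT) //=; apply: eq_bigr => t _.
rewrite (eq_bigr (fun _ => F t)) => [|d /eqP -> //].
by rewrite sumr_const mulr_natl cardsE.
Qed.

Section ScaledDecomposition.
Variables (V : finType) (E : {set K V}) (k : nat) (v : vec V) (s : seq (vec V)).
Hypotheses (sPM : all_in (@PM V) s) (vE : forall e, v.1 e = (e \in E)).
Hypotheses (s1 : forall e, k * v.1 e = \sum_(x <- s) x.1 e)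
  (s2 : forall c, k * v.2 c = \sum_(x <- s) x.2 c).

Lemma cone_size_degree (a : V) : \sum_(e : K V | a \in val e) k * v.1 e = size s.
Proof.
under eq_bigr => e _ do rewrite s1.
rewrite exchange_big /= (all_in_sum (G := fun=> 1) sPM) ?sum1_size //.
by move=> x hx; apply: PM_degree.
Qed.

Lemma cone_size_partition : \sum_(c : C V) k * v.2 c = size s.
Proof.
under eq_bigr => c _ do rewrite s2.
rewrite exchange_big /= (all_in_sum (G := fun=> 1) sPM) ?sum1_size //.
by move=> x hx; apply: PM_partition.
Qed.

Lemma partition_total (a0 : V) (r : nat) : 0 < k -> regular E r -> \sum_c v.2 c = r.
Proof.
move=> k_gt0 hreg; apply/eqP; rewrite -(eqn_pmul2l k_gt0) big_distrr /=.
rewrite cone_size_partition -(cone_size_degree a0) -big_distrr /= -(hreg a0).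
by under eq_bigr => e _ do rewrite vE; rewrite sum_indicator_card.
Qed.

(* The number of matchings of s with partition c that contain the edge e. *)
Definition weight (c : C V) (e : K V) : nat := \sum_(x <- s) x.2 c * x.1 e.

Lemma weight_partitions (e : K V) : \sum_c weight c e = k * v.1 e.
Proof.
rewrite s1 /weight exchange_big /=; apply: (all_in_sum sPM) => x hx.
by rewrite -big_distrl /= PM_partition // mul1n.
Qed.

Lemma weight_degree (c : C V) (a : V) : \sum_(e : K V | a \in val e) weight c e = k * v.2 c.
Proof.
rewrite s2 /weight exchange_big /=; apply: (all_in_sum sPM) => x hx.
by rewrite -big_distrr /= PM_degree // muln1.
Qed.

Lemma weight_noncross (c : C V) (e : K V) : ~~ crosses c e -> weight c e = 0.
Proof.
move=> nc; rewrite /weight (all_in_sum (G := fun=> 0) sPM) ?big1 // => x hx.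
have [->//|xc] := eqVneq (x.2 c) 0; have [->|xe] := eqVneq (x.1 e) 0; first by rewrite muln0.
by move: nc; rewrite (PM_cross hx xc xe).
Qed.

Lemma weight_le (c : C V) (e : K V) : weight c e <= k * v.2 c.
Proof.
rewrite s2 /weight; apply: (all_in_sum_le sPM) => x hx.
by rewrite -{2}(muln1 (x.2 c)) leq_mul2l PM_edge_le1 ?orbT.
Qed.

(* Averaging the matchings of s over the colours of a HAP table with the
   multiplicities of v gives a (fractional) point of P(G, HA). *)
Lemma fractional_point (R : realFieldType) (r : nat) (HA : 'I_r -> C V) : 0 < k ->
  (forall c, #|[set d | HA d == c]| = v.2 c) -> exists x : K V -> 'I_r -> R, in_P E HA x.
Proof.
move=> k_gt0 hHA; pose x e d : R := ((weight (HA d) e)%:R / (k * v.2 (HA d))%:R)%R.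
have kv_neq0 d : ((k * v.2 (HA d))%:R != 0 :> R)%R.
  rewrite pnatr_eq0 muln_eq0 negb_or -!lt0n k_gt0 -hHA card_gt0.
  by apply/set0Pn; exists d; rewrite inE.
have x0 e d : (0 <= x e d)%R by rewrite divr_ge0 // ler0n.
have xE e : e \in E -> (\sum_d x e d = 1)%R.
  move=> eE; rewrite (sum_table HA (fun c => (weight c e)%:R / (k * v.2 c)%:R)%R).
  transitivity (\sum_c (weight c e)%:R / k%:R : R)%R.
    apply: eq_bigr => c _; rewrite hHA; have [vc0|vc_gt0] := posnP (v.2 c).
      by move: (weight_le c e); rewrite vc0 muln0 leqn0 => /eqP ->; rewrite !mul0r.
    rewrite natrM invfM mulrCA; congr (_ * _)%R.
    by rewrite mulrCA divff ?mulr1 // pnatr_eq0 -lt0n.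
  by rewrite -mulr_suml -natr_sum weight_partitions vE eE muln1 divff // pnatr_eq0 -lt0n.
exists x; split => //.
- move=> e d eE; rewrite /x; suff -> : weight (HA d) e = 0 by rewrite mul0r.
  apply/eqP; rewrite -leqn0; have := weight_partitions e; rewrite vE (negbTE eE) muln0 => <-.
  by rewrite (bigD1 (HA d)) ?leq_addr.
- by move=> d a; rewrite /x -mulr_suml -natr_sum weight_degree divff.
- move=> e d eE; rewrite x0 /= -(xE e eE) (bigD1 d) //= lerDl sumr_ge0 //.
- by move=> e d _ nc; rewrite /x weight_noncross // mul0r.
Qed.

End ScaledDecomposition.

Lemma sum_pair (I J : finType) (U : nmodType) (F : I * J -> U) :
  (\sum_p F p = \sum_i \sum_j F (i, j))%R.
Proof. by rewrite pair_big; apply: eq_bigr => -[]. Qed.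

Lemma sum_pick_nat (I : finType) (i0 : I) (P : bool) (f : I -> nat) :
  \sum_i ((i == i0) && P) * f i = P * f i0.
Proof. by rewrite (bigD1 i0) //= eqxx big1 ?addn0 // => i /negbTE ->. Qed.

Section HapSystem.
Variables (V : finType) (E : {set K V}) (r : nat) (HA : 'I_r -> C V).

(* The equations of P(G, HA) as a linear system with natural coefficients in
   the unknowns x_(e,d): the edge equations (1), the vertex equations (2),
   and x_(e,d) = 0 for non-crossing pairs (4). *)
Definition hap_coeff (j : (K V + 'I_r * V) + K V * 'I_r) (p : K V * 'I_r) : nat :=
  match j with
  | inl (inl e0) => p.1 == e0
  | inl (inr (d0, a0)) => (p.2 == d0) && (a0 \in val p.1)
  | inr ed => (p == ed) && ~~ crosses (HA ed.2) ed.1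
  end.

Definition hap_rhs (j : (K V + 'I_r * V) + K V * 'I_r) : nat :=
  match j with inl (inl e0) => e0 \in E | inl (inr _) => 1 | inr _ => 0 end.

Lemma in_P_solves (R : realFieldType) (x : K V -> 'I_r -> R) :
  in_P E HA x -> solves hap_coeff hap_rhs (fun p => x p.1 p.2).
Proof.
move=> [xE x0 xdeg _ xcross] [[e0|[d0 a0]]|[e0 d0]] /=; rewrite sum_pair /=.
- rewrite (bigD1 e0) //= [X in (_ + X)%R]big1 => [|e /negbTE ->]; last first.
    by rewrite big1 // => d _; rewrite mul0r.
  rewrite addr0 eqxx; under eq_bigr => d _ do rewrite mul1r.
  by have [eE|eE] := boolP (e0 \in E); [rewrite xE | rewrite big1 // => d _; rewrite x0].
- under eq_bigr => e _ do rewrite (sum_pick d0 (a0 \in val e) (x e)).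
  rewrite -[RHS](xdeg d0 a0) [RHS]big_mkcond /=; apply: eq_bigr => e _.
  by case: (a0 \in val e); rewrite ?mul1r ?mul0r.
- rewrite (bigD1 e0) //= (bigD1 d0) //= !eqxx /= !big1 => [|e /negbTE ne|d /negbTE nd].
  + case: (boolP (crosses (HA d0) e0)) => /= hc; first by rewrite mul0r !addr0.
    have [eE|eE] := boolP (e0 \in E); first by rewrite xcross // mulr0 !addr0.
    by rewrite x0 // mulr0 !addr0.
  + by rewrite big1 // => d _; rewrite xpair_eqE ne mul0r.
  + by rewrite xpair_eqE nd andbF mul0r.
Qed.

Definition scaled_colouring (k : nat) (z : K V -> 'I_r -> nat) : Prop :=
  [/\ forall e, \sum_d z e d = k * (e \in E),
      forall d (a : V), \sum_(e : K V | a \in val e) z e d = k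
    & forall e d, 0 < z e d -> crosses (HA d) e].

Lemma scaled_colouring_exists (R : realFieldType) (x : K V -> 'I_r -> R) :
  in_P E HA x -> exists2 k, 0 < k & exists z, scaled_colouring k z.
Proof.
move=> xP; have [xE x0 _ xbd _] := xP.
have xge0 (p : K V * 'I_r) : (0 <= x p.1 p.2)%R.
  by have [/(xbd _ p.2) /andP []|/(x0 _ p.2) ->] := boolP (p.1 \in E).
have [k k_gt0 [z hz]] := scaled_natural_solution xge0 (in_P_solves xP).
exists k => //; exists (fun e d => z (e, d)); split.
- move=> e; rewrite -(hz (inl (inl e))) /= sum_pair (bigD1 e) //=.
  rewrite [X in (_ + X)%R]big1 => [|e' /negbTE ->]; last by rewrite big1.
  by rewrite addr0; apply: eq_bigr => d _; rewrite eqxx mul1n.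
- move=> d a; have := hz (inl (inr (d, a))); rewrite /= muln1 => <-.
  rewrite sum_pair [LHS]big_mkcond /=; apply: eq_bigr => e _.
  rewrite (sum_pick_nat d (a \in val e) (fun j => z (e, j))).
  by case: (a \in val e); rewrite ?mul1n.
- move=> e d; apply: contraTT => nc; have := hz (inr (e, d)).
  rewrite /= muln0 sum_pair (bigD1 e) //= (bigD1 d) //= !eqxx nc mul1n.
  by move=> /eqP; rewrite !addn_eq0 => /andP [/andP [/eqP -> _] _].
Qed.

(* Decomposing each colour class of a scaled colouring into k perfect
   matchings (Koenig) exhibits k table_vec as a sum of elements of PM(V). *)
Lemma colour_classes_cone (k : nat) (z : K V -> 'I_r -> nat) :
  scaled_colouring k z -> forall l : seq 'I_r, exists s : seq (vec V),
   [/\ all_in (@PM V) s, forall e, \sum_(x <- s) x.1 e = \sum_(d <- l) z e d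
     & forall c, \sum_(x <- s) x.2 c = \sum_(d <- l) k * (c == HA d)].
Proof.
move=> [_ z_reg z_cross]; elim => [|d l [s [sPM s1 s2]]].
  by exists [::]; split => // [e|c]; rewrite !big_nil.
have [qs [sz pm hz]] := regular_decomposition (fun e => z_cross e d) (z_reg d).
exists (map (pm_vec (HA d)) qs ++ s); split.
- apply: all_in_cat => //.
  by elim: qs {sz hz} pm => //= q qs IH /andP [pq /IH]; split => //; apply: pm_vecP.
- by move=> e; rewrite big_cat /= big_map s1 big_cons hz.
- move=> c; rewrite big_cat /= big_map s2 big_cons; congr (_ + _).
  by rewrite big_const_seq count_predT sz iter_addn_0 mulnC.
Qed.

Lemma scaled_colouring_cone (k : nat) (z : K V -> 'I_r -> nat) :
  scaled_colouring k z -> Ncone (@PM V) (scale_vec k (table_vec E HA)).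
Proof.
move=> hz; have [z_edge _ _] := hz.
have [s [sPM s1 s2]] := colour_classes_cone hz (index_enum 'I_r).
exists s; split => //; split=> [e|c] /=; first by rewrite s1 z_edge.
rewrite s2 -big_distrr /= sum_bool_card.
suff -> : [set d | c == HA d] = [set d | HA d == c] by [].
by apply/setP => d; rewrite !inE eq_sym.
Qed.

End HapSystem.

Section MainEquivalence.
Variables (R : realFieldType) (V : finType).

Lemma Ncone_ext (M : vec V -> Prop) (v w : vec V) :
  (forall e, v.1 e = w.1 e) -> (forall c, v.2 c = w.2 c) -> Ncone M w -> Ncone M v.
Proof.
by move=> h1 h2 [s [sM [s1 s2]]]; exists s; split=> //; split=> [e|c]; rewrite ?h1 ?h2.
Qed.

(* B-factorizability gives the HAP condition: a point of P(G, HA) yields a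
   scaled colouring, i.e. k table_vec \in N(PM); by B-factorizability
   table_vec \in N(PM), i.e. a matching colouring, i.e. an integral point. *)
Lemma B_factorizable_HAP (E : {set K V}) (r : nat) :
  B_factorizable E -> HAP_condition R E r.
Proof.
move=> hB HA [x xP]; have [k k_gt0 [z hz]] := scaled_colouring_exists xP.
have [|g hg] := @cone_colouring _ E r HA.
  by apply: hB => // ; exists k; split => //; apply: scaled_colouring_cone hz.
exact: colouring_point hg.
Qed.

(* The HAP condition gives B-factorizability: if k v \in N(PM), take a HAP
   table with the partition multiplicities of v; averaging gives a point of
   P(G, HA), the HAP condition an integral one, i.e. a matching colouring,
   which decomposes v itself. *)
Lemma HAP_B_factorizable (E : {set K V}) (r : nat) (a0 : V) :
  regular E r -> HAP_condition R E r -> B_factorizable E.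
Proof.
move=> hreg hap v [k [k_gt0 [s [sPM [s1 s2]]]]] vE.
have [HA hHA] := table_exists (partition_total sPM vE s1 s2 a0 k_gt0 hreg).
have [x [xP xint]] := hap HA (fractional_point sPM vE s1 s2 R k_gt0 hHA).
have [g /colouring_cone hv] := point_colouring xP xint.
by apply: (Ncone_ext _ _ hv) => [e|c] /=; rewrite ?vE ?hHA.
Qed.

(* On an empty vertex set there are no edges and the empty matching is a
   perfect matching of B_c for the unique c; every v is then in N(PM). *)
Lemma B_factorizable_empty (E : {set K V}) : #|V| = 0 -> B_factorizable E.
Proof.
move=> V0 v _ vE; have noK (e : K V) : False.
  by have [a _] := edge_has_vertex e; move: (card0_eq V0 a); rewrite inE.
have [HA hHA] := table_exists (erefl (\sum_c v.2 c)).
have /colouring_cone hv : matching_colouring E HA (fun=> set0).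
  split=> [d|e]; last by case: (noK e).
  apply/andP; split; first by apply/forallP => e; rewrite inE.
  by apply/forallP => a; move: (card0_eq V0 a); rewrite inE.
by apply: (Ncone_ext _ _ hv) => [e|c] /=; [case: (noK e) | rewrite hHA].
Qed.

(* K_V is (|V|-1)-regular: the edges at a are the pairs {a, b}, b != a. *)
Lemma regular_complete : regular [set: K V] #|V|.-1.
Proof.
move=> a; rewrite -(cardsC1 a) -(card_imset _ val_inj).
have -> : val @: [set e in [set: K V] | a \in val e] = [set [set a; b] | b in [set~ a]].
  apply/setP => X; apply/imsetP/imsetP => [[e]|[b]]; rewrite !inE /=.
    move=> ae ->; have : #|val e :\ a| == 1.
      by have := cardsD1 a (val e); rewrite ae (eqP (valP e)) add1n => -[<-].
    move=> /cards1P [b hb].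
    have : b \in val e :\ a by rewrite hb set11.
    rewrite !inE => /andP [ba be]; exists b; first by rewrite !inE.
    by apply: edge_pair_eq ae be _; rewrite eq_sym.
  move=> ba ->; have p : #|[set a; b]| == 2 by rewrite cards2 (eq_sym a) ba.
  by exists (exist _ [set a; b] p : K V) => //; rewrite !inE /= eqxx.
rewrite card_in_imset // => b1 b2; rewrite !inE => b1a _ e.
have : b1 \in [set a; b2] by rewrite -e !inE eqxx orbT.
by rewrite !inE (negbTE b1a) => /eqP.
Qed.

End MainEquivalence.

Unset Implicit Arguments.
Theorem mainTheorem4 (R : realFieldType) (V : finType) (hV : ~~ odd #|V|) :
  (forall (E : {set K V}) (r : nat), regular E r ->
     (B_factorizable E <-> HAP_condition R E r)) /\
  (B_factorizable [set: K V] <-> HAP_condition R [set: K V] #|V|.-1).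
Proof.
have equiv (E : {set K V}) (r : nat) :
    regular E r -> B_factorizable E <-> HAP_condition R E r.
  move=> hreg; split; first exact: B_factorizable_HAP.
  have [V0|[a0 _]] := set_0Vmem [set: V].
    by move=> _; apply: B_factorizable_empty; rewrite -cardsT V0 cards0.
  exact: HAP_B_factorizable a0 hreg.
by split=> //; apply: equiv; apply: regular_complete.
Qed.
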